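(* Assume (A1)–(A4) and let $b\in\mathcal H$ be arbitrary. Let $E_k=\rho_1\|r_k\|^2+\rho_2\|s_k\|^2+\rho_2\|y_k-y_{k-1}\|^2$ for $k\ge1$. Then for all $k\ge1$, $$E_{k+1}-E_k\le-\rho_1\|r_{k+1}-r_k\|^2-4c_0\|y_{k+1}-y_k\|^2.$$ In particular $(E_k)$ is monotonically nonincreasing and $\sum_{k=1}^\infty\|y_{k+1}-y_k\|^2<\infty$.
   Context: $\mathcal X,\mathcal Y,\mathcal H$ are real Hilbert spaces. Standing assumptions: (A1) $A:\mathcal X\to\mathcal H$ is bounded linear. (A2) $f:\mathcal Y\to(-\infty,\infty]$ is proper, lower semicontinuous and strongly convex with constant $c_0>0$: $f(ty_1+(1-t)y_2)+c_0t(1-t)\|y_1-y_2\|^2\le tf(y_1)+(1-t)f(y_2)$ for all $y_1,y_2$, $t\in[0,1]$. (A3) $W:\mathscr D(W)\subset\mathcal X\to\mathcal Y$ is a densely defined closed linear operator. (A4) There is $c_1>0$ with $\|Ax\|^2+\|Wx\|^2\ge c_1\|x\|^2$ for all $x\in\mathscr D(W)$. ADMM: fix $\rho_1,\rho_2>0$ and initial $y_0\in\mathcal Y$, $\lambda_0\in\mathcal H$, $\mu_0\in\mathcal Y$. For $k=0,1,\dots$: $x_{k+1}=\arg\min_{x\in\mathscr D(W)}\{\langle\lambda_k,Ax\rangle+\langle\mu_k,Wx\rangle+\frac{\rho_1}{2}\|Ax-b\|^2+\frac{\rho_2}{2}\|Wx-y_k\|^2\}$, $y_{k+1}=\arg\min_{y\in\mathcal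 Y}\{f(y)-\langle\mu_k,y\rangle+\frac{\rho_2}{2}\|Wx_{k+1}-y\|^2\}$, $\lambda_{k+1}=\lambda_k+\rho_1(Ax_{k+1}-b)$, $\mu_{k+1}=\mu_k+\rho_2(Wx_{k+1}-y_{k+1})$. (Under (A1)–(A4) these minimizers exist and are unique.) Residuals: $r_k=Ax_k-b$, $s_k=Wx_k-y_k$ for $k\ge1$. *)

From Stdlib Require Import Reals Lra.
Open Scope R_scope.

Record Hilbert : Type := MkHilbert {
  car :> Type;
  hzero : car;
  hadd : car -> car -> car;
  hopp : car -> car;
  hscal : R -> car -> car;
  hinner : car -> car -> R;
  hadd_assoc : forall x y z, hadd x (hadd y z) = hadd (hadd x y) z;
  hadd_comm : forall x y, hadd x y = hadd y x;
  hadd_zero : forall x, hadd x hzero = x;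
  hadd_opp : forall x, hadd x (hopp x) = hzero;
  hscal_assoc : forall a b x, hscal a (hscal b x) = hscal (a * b) x;
  hscal_one : forall x, hscal 1 x = x;
  hscal_distr_v : forall a x y, hscal a (hadd x y) = hadd (hscal a x) (hscal a y);
  hscal_distr_s : forall a b x, hscal (a + b) x = hadd (hscal a x) (hscal b x);
  hinner_sym : forall x y, hinner x y = hinner y x;
  hinner_add_l : forall x y z, hinner (hadd x y) z = hinner x z + hinner y z;
  hinner_scal_l : forall a x y, hinner (hscal a x) y = a * hinner x y;
  hinner_pos : forall x, 0 <= hinner x x;
  hinner_def : forall x, hinner x x = 0 -> x = hzero;
  hcomplete : forall u : nat -> car,
    (forall eps, 0 < eps -> exists N, forall m n, (N <= m)%nat -> (N <= n)%nat ->
        sqrt (hinner (hadd (u m) (hopp (u n))) (hadd (u m) (hopp (u n)))) < eps) ->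
    exists l, forall eps, 0 < eps -> exists N, forall n, (N <= n)%nat ->
        sqrt (hinner (hadd (u n) (hopp l)) (hadd (u n) (hopp l))) < eps
}.

Arguments hzero {h}.
Arguments hadd {h}.
Arguments hopp {h}.
Arguments hscal {h}.
Arguments hinner {h}.

Definition vsub {H : Hilbert} (x y : H) : H := hadd x (hopp y).
Definition norm {H : Hilbert} (x : H) : R := sqrt (hinner x x).

Definition vconv {H : Hilbert} (u : nat -> H) (l : H) : Prop :=
  forall eps, 0 < eps -> exists N, forall n, (N <= n)%nat -> norm (vsub (u n) l) < eps.

Definition bounded_linear {X Y : Hilbert} (A : X -> Y) : Prop :=
  (forall x y, A (hadd x y) = hadd (A x) (A y)) /\
  (forall a x, A (hscal a x) = hscal a (A x)) /\
  (exists C, forall x, norm (A x) <= C * norm x).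

(** Linear operator W with domain D (a linear subspace); values of W
    outside D are irrelevant. *)
Definition linear_on {X Y : Hilbert} (D : X -> Prop) (W : X -> Y) : Prop :=
  D hzero /\
  (forall x y, D x -> D y -> D (hadd x y)) /\
  (forall a x, D x -> D (hscal a x)) /\
  (forall x y, D x -> D y -> W (hadd x y) = hadd (W x) (W y)) /\
  (forall a x, D x -> W (hscal a x) = hscal a (W x)).

Definition densely_defined {X : Hilbert} (D : X -> Prop) : Prop :=
  forall x eps, 0 < eps -> exists z, D z /\ norm (vsub x z) < eps.

Definition closed_op {X Y : Hilbert} (D : X -> Prop) (W : X -> Y) : Prop :=
  forall (u : nat -> X) x y, (forall n, D (u n)) -> vconv u x ->
    vconv (fun n => W (u n)) y -> D x /\ W x = y.

(** Extended reals (-oo, +oo]: [None] is +oo. *)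
Definition ER := option R.

Definition ER_le (e1 e2 : ER) : Prop :=
  match e1, e2 with
  | _, None => True
  | None, Some _ => False
  | Some a, Some b => a <= b
  end.

Definition ER_gt (e : ER) (c : R) : Prop :=
  match e with None => True | Some a => c < a end.

Definition ER_plus (e : ER) (r : R) : ER := option_map (fun a => a + r) e.

Definition proper {Y : Hilbert} (f : Y -> ER) : Prop := exists y, f y <> None.

Definition lsc {Y : Hilbert} (f : Y -> ER) : Prop :=
  forall y c, ER_gt (f y) c ->
    exists delta, 0 < delta /\ forall z, norm (vsub z y) < delta -> ER_gt (f z) c.

(** Strong convexity with constant c0 (the inequality is trivial when its
    right-hand side is +oo, i.e. when f y1 or f y2 is +oo; for t = 0 or 1
    it is trivial too, so only the finite case needs to be stated). *)
Definition strongly_convex {Y : Hilbert} (f : Y -> ER) (c0 : R) : Prop :=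
  forall y1 y2 t a1 a2, 0 <= t <= 1 -> f y1 = Some a1 -> f y2 = Some a2 ->
    ER_le (ER_plus (f (hadd (hscal t y1) (hscal (1 - t) y2)))
                   (c0 * t * (1 - t) * (norm (vsub y1 y2)) ^ 2))
          (Some (t * a1 + (1 - t) * a2)).

Definition admm_xobj {X Y H : Hilbert} (A : X -> H) (W : X -> Y) (b : H)
  (rho1 rho2 : R) (lam : H) (mu : Y) (yk : Y) (x : X) : R :=
  hinner lam (A x) + hinner mu (W x)
  + rho1 / 2 * (norm (vsub (A x) b)) ^ 2 + rho2 / 2 * (norm (vsub (W x) yk)) ^ 2.

Definition admm_yobj {Y : Hilbert} (f : Y -> ER) (rho2 : R) (mu : Y) (Wx : Y) (y : Y) : ER :=
  ER_plus (f y) (- hinner mu y + rho2 / 2 * (norm (vsub Wx y)) ^ 2).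

(** The sequences x, y, lam, mu are ADMM iterates (x 0 is unused; y 0,
    lam 0, mu 0 are the initial values). Since the minimizers are unique,
    this characterises the ADMM sequence. *)
Definition is_admm {X Y H : Hilbert} (A : X -> H) (D : X -> Prop) (W : X -> Y)
  (f : Y -> ER) (b : H) (rho1 rho2 : R)
  (x : nat -> X) (y : nat -> Y) (lam : nat -> H) (mu : nat -> Y) : Prop :=
  forall k,
    (D (x (S k)) /\
     forall z, D z -> admm_xobj A W b rho1 rho2 (lam k) (mu k) (y k) (x (S k))
                      <= admm_xobj A W b rho1 rho2 (lam k) (mu k) (y k) z) /\
    (forall z, ER_le (admm_yobj f rho2 (mu k) (W (x (S k))) (y (S k)))
                     (admm_yobj f rho2 (mu k) (W (x (S k))) z)) /\
    lam (S k) = hadd (lam k) (hscal rho1 (vsub (A (x (S k))) b)) /\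
    mu (S k) = hadd (mu k) (hscal rho2 (vsub (W (x (S k))) (y (S k)))).

From Stdlib Require Import Reals Lra Lia.
Open Scope R_scope.

(* Write d_k = y_k - y_(k-1). The x-step is a minimisation over the subspace D, so its
   first-order condition <lam_(k+1), A d> + <mu_(k+1) + rho2 d_(k+1), W d> = 0 holds for every
   d in D; subtracting two consecutive ones and testing with d = x_(k+1) - x_k gives
   rho1 <r_(k+1), r_(k+1) - r_k> + rho2 <s_(k+1) + d_(k+1) - d_k, W d> = 0. The y-step makes
   mu_(k+1) a strong subgradient of f at y_(k+1), and strong subgradients are strongly
   monotone: rho2 <s_(k+1), d_(k+1)> = <mu_(k+1) - mu_k, d_(k+1)> >= 2 c0 |d_(k+1)|^2.
   Expanding E_(k+1) - E_k with |u|^2 - |v|^2 = 2 <u, u - v> - |u - v|^2 and eliminating the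
   cross terms with the first identity leaves
   E_(k+1) - E_k = - rho1 |r_(k+1) - r_k|^2 - 2 rho2 <s_(k+1), d_(k+1)> - rho2 |W d - d_k|^2,
   whence the inequality; summability follows by telescoping. *)

Section InnerProduct.
Context {V : Hilbert}.
Implicit Types u v w : V.

Lemma hinner_zero_l v : hinner hzero v = 0.
Proof.
  pose proof (hinner_add_l _ hzero hzero v) as E.
  rewrite hadd_zero in E. lra.
Qed.

Lemma hinner_opp_l u v : hinner (hopp u) v = - hinner u v.
Proof.
  pose proof (hinner_add_l _ u (hopp u) v) as E.
  rewrite hadd_opp, hinner_zero_l in E. lra.
Qed.

Lemma hinner_sub_l u v w : hinner (vsub u v) w = hinner u w - hinner v w.
Proof. unfold vsub. rewrite hinner_add_l, hinner_opp_l. ring. Qed.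

Lemma hinner_add_r u v w : hinner u (hadd v w) = hinner u v + hinner u w.
Proof. rewrite !(hinner_sym _ u), hinner_add_l. reflexivity. Qed.

Lemma hinner_scal_r a u v : hinner u (hscal a v) = a * hinner u v.
Proof. rewrite !(hinner_sym _ u), hinner_scal_l. reflexivity. Qed.

Lemma hinner_sub_r u v w : hinner u (vsub v w) = hinner u v - hinner u w.
Proof. rewrite !(hinner_sym _ u), hinner_sub_l. reflexivity. Qed.

Lemma norm_sqr v : norm v ^ 2 = hinner v v.
Proof. unfold norm. rewrite <- Rsqr_pow2, Rsqr_sqrt; [reflexivity | apply hinner_pos]. Qed.

Lemma hilbert_ext u v : (forall w, hinner u w = hinner v w) -> u = v.
Proof.
  intros Huv.
  assert (Hz : vsub u v = hzero).
  { apply hinner_def. rewrite hinner_sub_l, Huv. ring. }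
  transitivity (hadd (vsub u v) v).
  - unfold vsub. rewrite <- hadd_assoc, (hadd_comm _ (hopp v)), hadd_opp, hadd_zero.
    reflexivity.
  - rewrite Hz, hadd_comm, hadd_zero. reflexivity.
Qed.

End InnerProduct.

Hint Rewrite @hinner_add_l @hinner_scal_l @hinner_sub_l @hinner_opp_l : hinner_l.

(* Vector identities are proved by pairing both sides with an arbitrary vector, which turns
   them into identities between reals. *)
Ltac hilbert_eq := apply hilbert_ext; intro; autorewrite with hinner_l; ring.

Section VectorIdentities.
Context {V : Hilbert}.
Implicit Types u v w z : V.

Lemma hopp_hscal u : hopp u = hscal (-1) u.
Proof. hilbert_eq. Qed.

Lemma vsub_hadd_l u v w : vsub (hadd u v) w = hadd (vsub u w) v.
Proof. hilbert_eq. Qed.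

Lemma vsub_sub_sub u v w z : vsub (vsub u v) (vsub w z) = vsub (vsub u w) (vsub v z).
Proof. hilbert_eq. Qed.

Lemma norm_sqr_add_scal u v t :
  norm (hadd u (hscal t v)) ^ 2 = norm u ^ 2 + 2 * t * hinner u v + t ^ 2 * norm v ^ 2.
Proof.
  rewrite !norm_sqr, hinner_add_l, !hinner_add_r, !hinner_scal_l, !hinner_scal_r,
    (hinner_sym _ v u).
  ring.
Qed.

Lemma norm_sqr_sub u v : norm (vsub u v) ^ 2 = norm u ^ 2 - 2 * hinner u v + norm v ^ 2.
Proof. rewrite !norm_sqr, hinner_sub_l, !hinner_sub_r, (hinner_sym _ v u). ring. Qed.

Lemma norm_sqr_sub_norm_sqr u v :
  norm u ^ 2 - norm v ^ 2 = 2 * hinner u (vsub u v) - norm (vsub u v) ^ 2.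
Proof. rewrite norm_sqr_sub, hinner_sub_r, !norm_sqr. ring. Qed.

End VectorIdentities.

Lemma bounded_linear_vsub {X Y : Hilbert} (A : X -> Y) :
  bounded_linear A -> forall u v, A (vsub u v) = vsub (A u) (A v).
Proof.
  intros [Hadd [Hscal _]] u v. unfold vsub. rewrite Hadd, !hopp_hscal, Hscal. reflexivity.
Qed.

Lemma linear_on_vsub {X Y : Hilbert} (D : X -> Prop) (W : X -> Y) :
  linear_on D W ->
  forall u v, D u -> D v -> D (vsub u v) /\ W (vsub u v) = vsub (W u) (W v).
Proof.
  intros [_ [Dadd [Dscal [Wadd Wscal]]]] u v Du Dv. unfold vsub. rewrite !hopp_hscal.
  split; [auto | rewrite Wadd, Wscal; auto].
Qed.

Lemma eq0_of_quadratic_nonneg g q : (forall t, 0 <= t * g + t ^ 2 * q) -> g = 0.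
Proof.
  intros Hq. set (m := Rabs q + 1).
  assert (Hm : 0 < m) by (pose proof (Rabs_pos q); unfold m; lra).
  (* With m = |q| + 1, the value at t = - g / m is at most - (g / m)^2. *)
  specialize (Hq (- g / m)).
  assert (Hle : (- g / m) ^ 2 * q <= (- g / m) ^ 2 * Rabs q).
  { apply Rmult_le_compat_l; [apply pow2_ge_0 | apply RRle_abs]. }
  assert (Hid : - g / m * g + (- g / m) ^ 2 * Rabs q = - (g / m) ^ 2)
    by (unfold m in *; field; lra).
  assert (H0 : (g / m) ^ 2 <= 0) by lra.
  assert (Hgm : g / m = 0) by (pose proof (pow2_ge_0 (g / m)); nra).
  apply (Rmult_eq_reg_r (/ m)); [lra | apply Rinv_neq_0_compat; lra].
Qed.

Lemma nonpos_of_quadratic_bound p k :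
  (forall t, 0 < t <= 1 -> t * p <= t ^ 2 * k) -> p <= 0.
Proof.
  intros Hk. destruct (Rle_lt_dec p 0) as [Hp | Hp]; [exact Hp |].
  set (m := p + Rabs k).
  assert (Hm : p <= m) by (pose proof (Rabs_pos k); unfold m; lra).
  assert (Ht : 0 < p / m <= 1).
  { split; [apply Rdiv_lt_0_compat; lra |].
    apply (Rmult_le_reg_r m); [lra |]. field_simplify; lra. }
  (* With m = p + |k|, the bound at t = p / m forces p^3 / m^2 <= 0. *)
  specialize (Hk _ Ht).
  assert (Hle : (p / m) ^ 2 * k <= (p / m) ^ 2 * Rabs k).
  { apply Rmult_le_compat_l; [apply pow2_ge_0 | apply RRle_abs]. }
  assert (Hid : p / m * p - (p / m) ^ 2 * Rabs k = p / m * (p / m) * p)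
    by (unfold m in *; field; lra).
  assert (0 < p / m * (p / m) * p) by (apply Rmult_lt_0_compat; [nra | lra]).
  lra.
Qed.

Lemma partial_sums_cv_of_telescoping (a e : nat -> R) (c : R) :
  0 < c -> (forall n, 0 <= a n) -> (forall n, 0 <= e n) ->
  (forall n, c * a n <= e n - e (S n)) ->
  exists l, Un_cv (fun n => sum_f_R0 a n) l.
Proof.
  intros Hc Ha He Hae.
  assert (Hsum : forall n, c * sum_f_R0 a n <= e O - e (S n)).
  { induction n as [| n IH]; cbn [sum_f_R0]; [apply Hae |].
    specialize (Hae (S n)). lra. }
  destruct (growing_cv (fun n => sum_f_R0 a n)) as [l Hl].
  - intro n. cbn [sum_f_R0]. specialize (Ha (S n)). lra.
  - exists (e O / c). intros v [n ->].
    apply (Rmult_le_reg_l c); [exact Hc |].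
    replace (c * (e O / c)) with (e O) by (field; lra).
    specialize (Hsum n). specialize (He (S n)). lra.
  - exists l. exact Hl.
Qed.

Section XSubproblem.
Context {X Y H : Hilbert} (A : X -> H) (D : X -> Prop) (W : X -> Y).
Context (HA : bounded_linear A) (HW : linear_on D W).
Context (b : H) (rho1 rho2 : R) (lam : H) (mu : Y) (yk : Y).

Definition admm_xobj_slope (x d : X) : R :=
  hinner (hadd lam (hscal rho1 (vsub (A x) b))) (A d)
  + hinner (hadd mu (hscal rho2 (vsub (W x) yk))) (W d).

Lemma admm_xobj_along x d t : D x -> D d ->
  admm_xobj A W b rho1 rho2 lam mu yk (hadd x (hscal t d))
  = admm_xobj A W b rho1 rho2 lam mu yk x + t * admm_xobj_slope x d
    + t ^ 2 * (rho1 / 2 * norm (A d) ^ 2 + rho2 / 2 * norm (W d) ^ 2).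
Proof.
  intros Dx Dd.
  destruct HA as [HAadd [HAscal _]]. destruct HW as [_ [_ [Dscal [HWadd HWscal]]]].
  unfold admm_xobj, admm_xobj_slope.
  rewrite HAadd, HAscal, HWadd, HWscal, !vsub_hadd_l, !norm_sqr_add_scal, !hinner_add_r,
    !hinner_scal_r, !hinner_add_l, !hinner_scal_l by auto.
  field.
Qed.

Lemma admm_xobj_stationary x : D x ->
  (forall z, D z -> admm_xobj A W b rho1 rho2 lam mu yk x
                    <= admm_xobj A W b rho1 rho2 lam mu yk z) ->
  forall d, D d -> admm_xobj_slope x d = 0.
Proof.
  intros Dx Hmin d Dd.
  destruct HW as [_ [Dadd [Dscal _]]].
  apply (eq0_of_quadratic_nonneg _ (rho1 / 2 * norm (A d) ^ 2 + rho2 / 2 * norm (W d) ^ 2)).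
  intro t. specialize (Hmin (hadd x (hscal t d)) (Dadd _ _ Dx (Dscal t d Dd))).
  rewrite admm_xobj_along in Hmin by assumption. lra.
Qed.

End XSubproblem.

Definition strong_subgradient {Y : Hilbert} (f : Y -> ER) (c0 : R) (y g : Y) : Prop :=
  exists a, f y = Some a /\
    forall z c, f z = Some c -> a + hinner g (vsub z y) + c0 * norm (vsub z y) ^ 2 <= c.

Lemma strong_subgradient_monotone {Y : Hilbert} (f : Y -> ER) c0 (y1 y2 g1 g2 : Y) :
  strong_subgradient f c0 y1 g1 -> strong_subgradient f c0 y2 g2 ->
  2 * c0 * norm (vsub y1 y2) ^ 2 <= hinner (vsub g1 g2) (vsub y1 y2).
Proof.
  intros [a1 [E1 H1]] [a2 [E2 H2]].
  specialize (H1 _ _ E2). specialize (H2 _ _ E1).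
  rewrite !norm_sqr_sub, !hinner_sub_r, !hinner_sub_l, (hinner_sym _ y2 y1) in *.
  lra.
Qed.

Lemma admm_yobj_strong_subgradient {Y : Hilbert} (f : Y -> ER) c0 rho2 (mu w y : Y) :
  proper f -> strongly_convex f c0 ->
  (forall z, ER_le (admm_yobj f rho2 mu w y) (admm_yobj f rho2 mu w z)) ->
  strong_subgradient f c0 y (hadd mu (hscal rho2 (vsub w y))).
Proof.
  intros [y0 Hy0] Hsc Hmin.
  destruct (f y) as [a |] eqn:Ea.
  2: { specialize (Hmin y0). unfold admm_yobj in Hmin. rewrite Ea in Hmin.
       destruct (f y0); [contradiction | congruence]. }
  exists a. split; [exact Ea |]. intros z c Ec.
  set (e := vsub z y).
  assert (Hbound : a + hinner (hadd mu (hscal rho2 (vsub w y))) e + c0 * norm e ^ 2 - c <= 0).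
  2: lra.
  apply (nonpos_of_quadratic_bound _ ((c0 + rho2 / 2) * norm e ^ 2)).
  intros t Ht.
  assert (Hyt : hadd (hscal t z) (hscal (1 - t) y) = hadd y (hscal t e))
    by (unfold e; hilbert_eq).
  assert (Hwt : vsub w (hadd y (hscal t e)) = hadd (vsub w y) (hscal (- t) e))
    by hilbert_eq.
  pose proof (Hsc z y t c a ltac:(lra) Ec Ea) as Hconv.
  specialize (Hmin (hadd y (hscal t e))).
  rewrite Hyt in Hconv. fold e in Hconv.
  unfold admm_yobj in Hmin. rewrite Ea, Hwt in Hmin.
  destruct (f (hadd y (hscal t e))) as [ft |]; [| contradiction].
  cbn [ER_le ER_plus option_map] in Hmin, Hconv.
  rewrite norm_sqr_add_scal, hinner_add_r, hinner_scal_r in Hmin.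
  rewrite hinner_add_l, hinner_scal_l.
  lra.
Qed.

Lemma lyapunov_descent {H Y : Hilbert} (rho1 rho2 c0 : R) (r r' : H) (s s' p q w : Y) :
  0 <= rho2 ->
  vsub s' s = vsub w p ->
  rho1 * hinner r' (vsub r' r) + rho2 * hinner (hadd s' (vsub p q)) w = 0 ->
  2 * c0 * norm p ^ 2 <= rho2 * hinner s' p ->
  rho1 * norm r' ^ 2 + rho2 * norm s' ^ 2 + rho2 * norm p ^ 2
  - (rho1 * norm r ^ 2 + rho2 * norm s ^ 2 + rho2 * norm q ^ 2)
  <= - rho1 * norm (vsub r' r) ^ 2 - 4 * c0 * norm p ^ 2.
Proof.
  intros Hrho2 Hs Heuler Hmono.
  assert (Hy : norm s' ^ 2 - norm s ^ 2 + (norm p ^ 2 - norm q ^ 2)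
               = 2 * hinner (hadd s' (vsub p q)) w - 2 * hinner s' p - norm (vsub w q) ^ 2).
  { rewrite norm_sqr_sub_norm_sqr, Hs, !norm_sqr_sub, hinner_sub_r, hinner_add_l,
      hinner_sub_l, (hinner_sym _ p w), (hinner_sym _ q w).
    ring. }
  assert (0 <= rho2 * norm (vsub w q) ^ 2) by (apply Rmult_le_pos; [lra | apply pow2_ge_0]).
  match goal with |- ?lhs <= _ =>
    replace lhs with (rho1 * (norm r' ^ 2 - norm r ^ 2)
                      + rho2 * (norm s' ^ 2 - norm s ^ 2 + (norm p ^ 2 - norm q ^ 2))) by ring
  end.
  rewrite norm_sqr_sub_norm_sqr, Hy.
  lra.
Qed.

Section AdmmIterates.
Context {X Y H : Hilbert} {A : X -> H} {D : X -> Prop} {W : X -> Y} {f : Y -> ER}.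
Context {c0 : R} {b : H} {rho1 rho2 : R}.
Context {x : nat -> X} {y : nat -> Y} {lam : nat -> H} {mu : nat -> Y}.
Context (HA : bounded_linear A) (HW : linear_on D W).
Context (Hf : proper f) (Hsc : strongly_convex f c0).
Context (Hadmm : is_admm A D W f b rho1 rho2 x y lam mu).

Local Notation r k := (vsub (A (x k)) b).
Local Notation s k := (vsub (W (x k)) (y k)).

Lemma admm_x_stationary k d : D d ->
  hinner (lam (S k)) (A d) + hinner (hadd (mu (S k)) (hscal rho2 (vsub (y (S k)) (y k)))) (W d)
  = 0.
Proof.
  intros Dd. destruct (Hadmm k) as [[Dx Hmin] [_ [Hlam Hmu]]].
  pose proof (admm_xobj_stationary A D W HA HW _ _ _ _ _ _ _ Dx Hmin d Dd) as G.
  unfold admm_xobj_slope in G. rewrite <- Hlam in G. rewrite <- G, Hmu.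
  autorewrite with hinner_l. ring.
Qed.

Lemma admm_y_strong_subgradient k : strong_subgradient f c0 (y (S k)) (mu (S k)).
Proof.
  destruct (Hadmm k) as [_ [Hmin [_ Hmu]]]. rewrite Hmu.
  exact (admm_yobj_strong_subgradient _ _ _ _ _ _ Hf Hsc Hmin).
Qed.

Lemma admm_stationary_difference k :
  rho1 * hinner (r (S (S k))) (vsub (r (S (S k))) (r (S k)))
  + rho2 * hinner (hadd (s (S (S k))) (vsub (vsub (y (S (S k))) (y (S k)))
                                             (vsub (y (S k)) (y k))))
                  (vsub (W (x (S (S k)))) (W (x (S k))))
  = 0.
Proof.
  destruct (Hadmm k) as [[Dx1 _] _]. destruct (Hadmm (S k)) as [[Dx2 _] [_ [Hlam Hmu]]].
  destruct (linear_on_vsub D W HW _ _ Dx2 Dx1) as [Dd HWd].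
  pose proof (admm_x_stationary (S k) _ Dd) as G2. pose proof (admm_x_stationary k _ Dd) as G1.
  rewrite (bounded_linear_vsub A HA), HWd in G1, G2.
  rewrite Hlam, Hmu in G2.
  replace (vsub (r (S (S k))) (r (S k))) with (vsub (A (x (S (S k)))) (A (x (S k))))
    by hilbert_eq.
  autorewrite with hinner_l in *.
  lra.
Qed.

Lemma admm_multiplier_monotone k :
  2 * c0 * norm (vsub (y (S (S k))) (y (S k))) ^ 2
  <= rho2 * hinner (s (S (S k))) (vsub (y (S (S k))) (y (S k))).
Proof.
  pose proof (strong_subgradient_monotone _ _ _ _ _ _
    (admm_y_strong_subgradient (S k)) (admm_y_strong_subgradient k)) as Hmono.
  destruct (Hadmm (S k)) as [_ [_ [_ Hmu]]].
  replace (vsub (mu (S (S k))) (mu (S k))) with (hscal rho2 (s (S (S k)))) in Hmono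
    by (rewrite Hmu; hilbert_eq).
  rewrite hinner_scal_l in Hmono. exact Hmono.
Qed.

End AdmmIterates.

Theorem lemma2p4 (X Y H : Hilbert) (A : X -> H) (D : X -> Prop) (W : X -> Y)
  (f : Y -> ER) (c0 c1 : R) (b : H) (rho1 rho2 : R)
  (x : nat -> X) (y : nat -> Y) (lam : nat -> H) (mu : nat -> Y)
  (HA1 : bounded_linear A)
  (HA2_proper : proper f) (HA2_lsc : lsc f) (Hc0 : 0 < c0)
  (HA2_sc : strongly_convex f c0)
  (HA3_lin : linear_on D W) (HA3_dense : densely_defined D)
  (HA3_closed : closed_op D W)
  (Hc1 : 0 < c1)
  (HA4 : forall z, D z -> (norm (A z)) ^ 2 + (norm (W z)) ^ 2 >= c1 * (norm z) ^ 2)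
  (Hrho1 : 0 < rho1) (Hrho2 : 0 < rho2)
  (Hadmm : is_admm A D W f b rho1 rho2 x y lam mu) :
  let r := fun k => vsub (A (x k)) b in
  let s := fun k => vsub (W (x k)) (y k) in
  let E := fun k => rho1 * (norm (r k)) ^ 2 + rho2 * (norm (s k)) ^ 2
                    + rho2 * (norm (vsub (y k) (y (k - 1)%nat))) ^ 2 in
  (forall k, (1 <= k)%nat ->
     E (S k) - E k <= - rho1 * (norm (vsub (r (S k)) (r k))) ^ 2
                      - 4 * c0 * (norm (vsub (y (S k)) (y k))) ^ 2) /\
  (forall k, (1 <= k)%nat -> E (S k) <= E k) /\
  (exists l, Un_cv (fun n => sum_f_R0 (fun i => (norm (vsub (y (i + 2)%nat) (y (i + 1)%nat))) ^ 2) n) l).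
Proof.
  (* Lower semicontinuity, (A3)'s density and closedness and (A4) only guarantee that the
     iterates exist; here they are given by [Hadmm]. *)
  intros r s E.
  assert (Hdescent : forall k, (1 <= k)%nat ->
     E (S k) - E k <= - rho1 * (norm (vsub (r (S k)) (r k))) ^ 2
                      - 4 * c0 * (norm (vsub (y (S k)) (y k))) ^ 2).
  { intros [| k] Hk; [lia |]. unfold E, r, s. rewrite !Nat.sub_succ, !Nat.sub_0_r.
    eapply lyapunov_descent; [lra | apply vsub_sub_sub |
      exact (admm_stationary_difference HA1 HA3_lin Hadmm k) |
      exact (admm_multiplier_monotone HA2_proper HA2_sc Hadmm k)]. }
  assert (Hdecay : forall k, (1 <= k)%nat ->
     rho1 * norm (vsub (r (S k)) (r k)) ^ 2 + 4 * c0 * norm (vsub (y (S k)) (y k)) ^ 2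
     <= E k - E (S k)).
  { intros k Hk. specialize (Hdescent k Hk). lra. }
  assert (HE : forall k, 0 <= E k).
  { intro k. unfold E. pose proof (pow2_ge_0 (norm (r k))). pose proof (pow2_ge_0 (norm (s k))).
    pose proof (pow2_ge_0 (norm (vsub (y k) (y (k - 1)%nat)))). nra. }
  split; [exact Hdescent | split].
  - intros k Hk. specialize (Hdecay k Hk).
    pose proof (pow2_ge_0 (norm (vsub (r (S k)) (r k)))).
    pose proof (pow2_ge_0 (norm (vsub (y (S k)) (y k)))). nra.
  - apply (partial_sums_cv_of_telescoping _ (fun n => E (S n)) (4 * c0)); [lra | | |].
    + intro n. apply pow2_ge_0.
    + intro n. apply HE.
    + intro n. replace (n + 2)%nat with (S (S n)) by lia. replace (n + 1)%nat with (S n) by lia.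
      specialize (Hdecay (S n) ltac:(lia)).
      pose proof (pow2_ge_0 (norm (vsub (r (S (S n))) (r (S n))))). nra.
Qed.
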